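(* Let $a<b$ be real numbers and $\{\mathcal N_x\}_{x\in[a,b]}$ a family of quantum channels. Suppose $x\mapsto\mathcal Q_\leftrightarrow(\mathcal N_x)$ is continuous and strictly decreasing on $[a,b]$, and suppose there are functions $\mathcal Q_{lb}(\mathcal N_x),\mathcal Q_{ub}(\mathcal N_x)$, continuous and strictly increasing in $x\in[a,b]$, with $\mathcal Q_{lb}(\mathcal N_x)\le\mathcal Q(\mathcal N_x)\le\mathcal Q_{ub}(\mathcal N_x)<\mathcal Q_\leftrightarrow(\mathcal N_x)$ for all $x\in[a,b]$ and $\mathcal Q_{lb}(\mathcal N_a)=\mathcal Q_{ub}(\mathcal N_a)$. Then there is a strictly decreasing sequence $(x_n)_{n\in\mathbb N}$ with $a<x_n<b$ for all $n$ such that for all $n<m$: $$\mathcal Q(\mathcal N_{x_m})<\mathcal Q(\mathcal N_{x_n})\quad\text{and}\quad \mathcal Q_\leftrightarrow(\mathcal N_{x_m})>\mathcal Q_\leftrightarrow(\mathcal N_{x_n}).$$ The analogous statement holds with $\mathcal P,\mathcal P_\leftrightarrow$ in place of $\mathcal Q,\mathcal Q_\leftrightarrow$.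
   Context: $\mathcal Q$ denotes the quantum capacity (with free forward classical communication) and $\mathcal Q_\leftrightarrow$ the quantum capacity assisted by free two-way classical communication; $\mathcal P,\mathcal P_\leftrightarrow$ are the corresponding private classical capacities. *)

From HB Require Import structures.
From mathcomp Require Import all_boot all_order all_algebra.
From mathcomp Require Import all_classical all_reals all_analysis.
Set Implicit Arguments. Unset Strict Implicit. Unset Printing Implicit Defensive.
Import Order.TTheory GRing.Theory Num.Theory.
Local Open Scope ring_scope.

Definition strict_incr_on (R : realType) (a b : R) (f : R -> R) : Prop :=
  {in `[a, b] &, forall x y, x < y -> f x < f y}.

Definition strict_decr_on (R : realType) (a b : R) (f : R -> R) : Prop :=
  {in `[a, b] &, forall x y, x < y -> f y < f x}.

From HB Require Import structures.
From mathcomp Require Import all_boot all_order all_algebra.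
From mathcomp Require Import all_classical all_reals all_analysis.
From mathcomp Require Import lra.
Set Implicit Arguments. Unset Strict Implicit. Unset Printing Implicit Defensive.
Import Order.TTheory GRing.Theory Num.Theory.
Import numFieldNormedType.Exports.
Local Open Scope classical_set_scope.
Local Open Scope ring_scope.

(* Write lb, ub, C, C2 for x |-> Clb (N x), Cub (N x),
   Cap (N x), Cap2 (N x).  Since ub is continuous at a, lb is strictly
   increasing and lb a = ub a, every x in (a, b] admits some y in (a, x)
   with ub y < lb x (lemma [right_continuous_undershoot]).  Iterating a choice
   of such a y from the midpoint of [a, b] gives a strictly decreasing sequence
   xs in (a, b) with ub (xs n.+1) < lb (xs n) (lemma [descending_chain]).
   For n < m the sandwich lb <= C <= ub and the monotonicity of ub then give
     C (xs m) <= ub (xs m) <= ub (xs n.+1) < lb (xs n) <= C (xs n),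
   while C2 (xs n) < C2 (xs m) is just the strict decrease of C2. *)

Lemma strict_incr_on_le (R : realType) (a b : R) (f : R -> R) (x y : R) :
  strict_incr_on a b f -> x \in `[a, b] -> y \in `[a, b] -> x <= y ->
  f x <= f y.
Proof.
move=> incr xI yI; rewrite le_eqVlt => /orP[/eqP-> //|xy].
exact/ltW/incr.
Qed.

Lemma right_continuous_undershoot (R : realType) (f g : R -> R) (a b x : R) :
  a < b -> {within `[a, b], continuous f} -> strict_incr_on a b g ->
  f a <= g a -> a < x -> x <= b ->
  exists2 y, a < y < x & f y < g x.
Proof.
move=> ab cf incr fga ax xb.
have [_ /cvgrPdist_lt cvg_fa _] := (continuous_within_itvP f ab).1 cf.
have gap : 0 < g x - f a.
  rewrite subr_gt0 (le_lt_trans fga) // incr // in_itv /= ?lexx ?(ltW ab) //.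
  by rewrite (ltW ax).
have near_fa := cvg_fa _ gap.
have : \forall y \near a^'+, [/\ a < y, y < x & `|f a - f y| < g x - f a].
  by near=> y; split; near: y; [exact: nbhs_right_gt|exact: nbhs_right_lt|].
move=> /filter_ex[y [ay yx]]; rewrite ltr_norml => /andP[fy _].
by exists y; [rewrite ay yx | lra].
Unshelve. all: end_near.
Qed.

Lemma descending_chain (R : realType) (P : R -> R -> Prop) (a b : R) :
  a < b -> (forall x, a < x -> x <= b -> exists2 y, a < y < x & P y x) ->
  exists xs : nat -> R,
    [/\ forall n m : nat, (n < m)%N -> xs m < xs n,
        forall n : nat, a < xs n /\ xs n < b &
        forall n : nat, P (xs n.+1) (xs n)].
Proof.
move=> ab step.
have /boolp.choice[pred predP] :
    forall x, exists y, a < x -> x <= b -> a < y < x /\ P y x.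
  move=> x; case: (boolP ((a < x) && (x <= b))) => [/andP[ax xb]|out].
    by have [y yI Pyx] := step x ax xb; exists y.
  by exists x => ax xb; rewrite ax xb in out.
pose xs n := iter n pred ((a + b) / 2).
have inI n : a < xs n /\ xs n < b.
  elim: n => [|n [axn xnb]]; first by have [] := midf_lt ab.
  have [/andP[axn1 xn1n] _] := predP _ axn (ltW xnb).
  by split=> //; apply: lt_trans xnb.
have link n : xs n.+1 < xs n /\ P (xs n.+1) (xs n).
  have [axn xnb] := inI n; have [/andP[_ ?] ?] := predP _ axn (ltW xnb).
  by split.
exists xs; split=> // [n m|n]; last by have [] := link n.
apply: (homo_ltn (r := fun u v => v < u)) => [y x z yx zy|i].
  exact: lt_trans zy yx.
by have [] := link i.
Qed.

Theorem mainTheorem9 (R : realType) (Chan : Type) (N : R -> Chan)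
    (Cap Cap2 Clb Cub : Chan -> R) (a b : R) :
  a < b ->
  {within `[a, b]%classic, continuous (fun x => Cap2 (N x))} ->
  strict_decr_on a b (fun x => Cap2 (N x)) ->
  {within `[a, b]%classic, continuous (fun x => Clb (N x))} ->
  strict_incr_on a b (fun x => Clb (N x)) ->
  {within `[a, b]%classic, continuous (fun x => Cub (N x))} ->
  strict_incr_on a b (fun x => Cub (N x)) ->
  (forall x, x \in `[a, b] ->
     Clb (N x) <= Cap (N x) /\ Cap (N x) <= Cub (N x) /\ Cub (N x) < Cap2 (N x)) ->
  Clb (N a) = Cub (N a) ->
  exists xs : nat -> R,
    (forall n m : nat, (n < m)%N -> xs m < xs n) /\
    (forall n : nat, a < xs n /\ xs n < b) /\
    (forall n m : nat, (n < m)%N ->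
       Cap (N (xs m)) < Cap (N (xs n)) /\ Cap2 (N (xs n)) < Cap2 (N (xs m))).
Proof.
move=> ab _ decr2 _ incr_lb cont_ub incr_ub bounds lb_ub_a.
have step x : a < x -> x <= b -> exists2 y, a < y < x & Cub (N y) < Clb (N x).
  by apply: right_continuous_undershoot ab cont_ub incr_lb _; rewrite lb_ub_a.
have [xs [decr inI link]] := descending_chain ab step.
have xsI n : xs n \in `[a, b].
  by have [axn xnb] := inI n; rewrite in_itv /= !ltW.
exists xs; split=> //; split=> // n m nm; split; last exact: decr2 (decr _ _ nm).
have [lb_n _] := bounds _ (xsI n).
have [_ [ub_m _]] := bounds _ (xsI m).
have ub_mono : Cub (N (xs m)) <= Cub (N (xs n.+1)).
  apply: strict_incr_on_le incr_ub _ _ _ => //.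
  by case: (ltngtP n.+1 m) => [/decr/ltW|//|->] //; rewrite ltnNge nm.
by apply: (le_lt_trans ub_m); apply: (le_lt_trans ub_mono); exact: lt_le_trans (link n) lb_n.
Qed.
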